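(* Let $(x_i^k)$, $(y_i^k)$ ($i=1,\dots,n$) and $(z^k)$ be generated by Algorithm PS (under (A1)–(A7)). Then for every $k\ge0$, every $i\in\{1,\dots,n\}$ and every $(r_i,a_i)$ with $a_i\in A_i(r_i)$, $$\langle r_i-x_i^k,\ y_i^k-(B_i+C_i+D_i)(r_i)-a_i\rangle\le\frac1{4\beta_i}\|x_i^k-G_iz^k\|^2.$$
   Context: Standing setting. Let $\mathcal H_0,\dots,\mathcal H_{n-1}$ be real Hilbert spaces ($n\ge2$) and $\mathcal H_n:=\mathcal H_0$. Conventions: $0\cdot\infty=0$, $r\cdot\infty=\infty$ for $r>0$, $1/\infty=0$, $1/0=\infty$. For each $i=1,\dots,n$: (A1) $G_i:\mathcal H_0\to\mathcal H_i$ is bounded linear and $G_n=I$; (A2) $A_i:\mathcal H_i\rightrightarrows\mathcal H_i$ is maximal monotone; (A3) $B_i:\mathcal H_i\to\mathcal H_i$ is monotone and $\ell_i$-Lipschitz, $\ell_i\in[0,\infty)$; (A4) $C_i:\mathcal H_i\to\mathcal H_i$ is $\beta_i$-cocoercive with $\beta_i\in(0,\infty]$, i.e. $\langle x-y,C_ix-C_iy\rangle\ge\beta_i\|C_ix-C_iy\|^2$ for all $x,y$ (so $\beta_i=\infty$ means $C_i$ is constant, and then $1/(4\beta_i)=0$); (A5) $D_i:\mathcal H_i\to\mathcal H_i$ is monotone and continuously differentiable with $\|D_i'(x)-D_i'(y)\|\le m_i\|x-y\|$ for all $x,y$, $m_i\in[0,\infty)$; (A6) with $T_i:=A_i+B_i+C_i+D_i$,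 the inclusion $0\in\sum_{i=1}^nG_i^*T_i(G_iz)$ has at least one solution $z\in\mathcal H_0$; (A7) there is $\mathcal I_D\subset\{1,\dots,n\}$ with $m_i>0$ for $i\in\mathcal I_D$ and $m_i=0$, $D_i=0$ for $i\notin\mathcal I_D$. Notation: $D_{i,(u)}(x):=D_i(u)+D_i'(u)(x-u)$; for a maximal monotone $S$, $J_S:=(S+I)^{-1}$. $\boldsymbol{\mathcal H}:=\mathcal H_0\times\mathcal H_1\times\cdots\times\mathcal H_{n-1}$ with inner product $\langle p,\tilde p\rangle_\gamma:=\gamma\langle z,\tilde z\rangle+\sum_{i=1}^{n-1}\langle w_i,\tilde w_i\rangle$ for $p=(z,w_1,\dots,w_{n-1})$, $\tilde p=(\tilde z,\tilde w_1,\dots,\tilde w_{n-1})$, and norm $\|\cdot\|_\gamma$; for such $p$ one writes $w_n:=-\sum_{i=1}^{n-1}G_i^*w_i$. The extended solution set is $\mathcal S:=\{p\in\boldsymbol{\mathcal H}: w_i\in T_i(G_iz),\ i=1,\dots,n\}$ (with $w_n$ as just defined). Algorithm PS. Input: $(z^0,w_1^0,\dots,w_{n-1}^0)\in\boldsymbol{\mathcal H}$, $0<\underline\tau<\overline\tau<2$, $0<\underline\theta<\overline\theta<2$, $\hat\rho>0$, $\hat\delta>0$, $\gamma>0$; $w_n^0:=-\sum_{i=1}^{n-1}G_i^*w_i^0$. For $k=0,1,2,\dots$: for each $i=1,\dots,n$ define $(\rho_i^k,x_i^k,y_i^k)$ as follows. (i) If $w_i^k\in T_i(G_iz^k)$: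 $\rho_i^k=\hat\rho$, $x_i^k=G_iz^k$, $y_i^k=w_i^k$. (ii) Otherwise, if $i\in\mathcal I_D$: $\rho_i^k>0$ and $x_i^k=J_{\rho_i^k(A_i+D_{i,(G_iz^k)})}\big(G_iz^k+\rho_i^kw_i^k-\rho_i^k(B_i+C_i)(G_iz^k)\big)$ satisfy $\underline\theta\le4\ell_i^2(\rho_i^k)^2+(\beta_i^{-1}+\hat\delta)\rho_i^k+(m_i\rho_i^k\|x_i^k-G_iz^k\|)^2\le\overline\theta$, and $y_i^k=\frac{G_iz^k-x_i^k}{\rho_i^k}+w_i^k+[B_i(x_i^k)-B_i(G_iz^k)]+[D_i(x_i^k)-D_{i,(G_iz^k)}(x_i^k)]$. (iii) Otherwise ($i\notin\mathcal I_D$): some $\rho_i^k>0$ is chosen, $x_i^k=J_{\rho_i^kA_i}\big(G_iz^k+\rho_i^kw_i^k-\rho_i^k(B_i+C_i)(G_iz^k)\big)$ and $y_i^k=\frac{G_iz^k-x_i^k}{\rho_i^k}+w_i^k+[B_i(x_i^k)-B_i(G_iz^k)]$. Then set $u_i^k=x_i^k-G_ix_n^k$ ($i=1,\dots,n-1$), $v^k=\sum_{i=1}^nG_i^*y_i^k$, $\varphi_k=\langle z^k,v^k\rangle+\sum_{i=1}^{n-1}\langle w_i^k,u_i^k\rangle-\sum_{i=1}^n\big[\langle x_i^k,y_i^k\rangle+\frac1{4\beta_i}\|x_i^k-G_iz^k\|^2\big]$, $\pi_k=\gamma^{-1}\|v^k\|^2+\sum_{i=1}^{n-1}\|u_i^k\|^2$.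 If $\varphi_k>0$: choose $\tau_k\in[\underline\tau,\overline\tau]$, $\alpha_k=\tau_k\varphi_k/\pi_k$, $z^{k+1}=z^k-\gamma^{-1}\alpha_kv^k$, $w_i^{k+1}=w_i^k-\alpha_ku_i^k$ ($i=1,\dots,n-1$); otherwise $z^{k+1}=z^k$, $w_i^{k+1}=w_i^k$. Finally $w_n^{k+1}=-\sum_{i=1}^{n-1}G_i^*w_i^{k+1}$. *)

From HB Require Import structures.
From mathcomp Require Import all_boot all_order all_algebra.
From mathcomp Require Import all_classical all_reals all_analysis.
Set Implicit Arguments. Unset Strict Implicit. Unset Printing Implicit Defensive.
Import Order.TTheory GRing.Theory Num.Theory.
Import numFieldNormedType.Exports.
Local Open Scope ring_scope.

HB.mixin Record CompleteNormedModule_isHilbert (R : realType) V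
    of CompleteNormedModule R V := {
  inner : V -> V -> R;
  innerC : forall x y : V, inner x y = inner y x;
  innerDl : forall x y z : V, inner (x + y) z = inner x z + inner y z;
  innerZl : forall (a : R) (x y : V), inner (a *: x) y = a * inner x y;
  inner_normE : forall x : V, inner x x = `|x| ^+ 2
}.

#[short(type="hilbertType")]
HB.structure Definition Hilbert (R : realType) :=
  {V of CompleteNormedModule_isHilbert R V & CompleteNormedModule R V}.

Section Ops.
Context {R : realType} {V : hilbertType R}.

(* set-valued operators V ⇉ V are relations: [S x u] means u ∈ S(x) *)
Definition monotone_op (S : V -> V -> Prop) :=
  forall x y u v, S x u -> S y v -> 0 <= inner (x - y) (u - v).

Definition maximal_monotone (S : V -> V -> Prop) :=
  monotone_op S /\
  forall S' : V -> V -> Prop, monotone_op S' ->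
    (forall x u, S x u -> S' x u) -> forall x u, S' x u -> S x u.

Definition graph_of (f : V -> V) : V -> V -> Prop := fun x u => u = f x.

Definition monotone_fun (f : V -> V) := monotone_op (graph_of f).

Definition lipschitz_with (l : R) (f : V -> V) :=
  forall x y, `|f x - f y| <= l * `|x - y|.

(* beta-cocoercive, beta in (0, +oo] (with 0 * +oo = 0) *)
Definition cocoercive (b : \bar R) (f : V -> V) :=
  forall x y, (b * (`|f x - f y| ^+ 2)%:E <= (inner (x - y) (f x - f y))%:E)%E.

Definition op_add (S : V -> V -> Prop) (f : V -> V) : V -> V -> Prop :=
  fun x u => exists s, S x s /\ u = s + f x.

Definition op_scale (rho : R) (S : V -> V -> Prop) : V -> V -> Prop :=
  fun x u => exists s, S x s /\ u = rho *: s.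

(* x = J_S(u) where J_S = (S + I)^{-1}, i.e. u ∈ x + S(x) *)
Definition is_resolvent (S : V -> V -> Prop) (u x : V) := S x (u - x).

Definition lin_at (D : V -> V) (u : V) : V -> V :=
  fun x => D u + 'd D u (x - u).

Definition T_op (A : V -> V -> Prop) (B C D : V -> V) : V -> V -> Prop :=
  fun x w => exists a, A x a /\ w = a + B x + C x + D x.

End Ops.

(* 1/b for b in (0,+oo], with 1/(+oo) = 0 *)
Definition ext_inv {R : realType} (b : \bar R) : R :=
  match b with EFin r => r^-1 | _ => 0 end.

(* Algorithm PS.  Indices: the paper's i = 1..n is j : 'I_p.+1 with     *)
(* i = j+1 (so n = p+1); the paper's H_n = H_0 is [H ord_max].           *)
Section PS.
Context {R : realType} {p : nat} (H : 'I_p.+1 -> hilbertType R).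
Local Notation H0 := (H ord_max).

Definition PS_iterates
  (G : forall i, H0 -> H i) (Gadj : forall i, H i -> H0)
  (A : forall i, H i -> H i -> Prop) (B C D : forall i, H i -> H i)
  (ell : 'I_p.+1 -> R) (beta : 'I_p.+1 -> \bar R) (mm : 'I_p.+1 -> R)
  (ID : {set 'I_p.+1})
  (tau_lo tau_hi theta_lo theta_hi rho_hat delta_hat gamma : R)
  (z : nat -> H0) (w : nat -> forall i, H i)
  (rho : nat -> 'I_p.+1 -> R) (x y : nat -> forall i, H i)
  (tau : nat -> R) : Prop :=
  (forall k, w k ord_max = - \sum_(i < p.+1 | i != ord_max) Gadj i (w k i)) /\
  (forall k i,
    let Gz := G i (z k) in
    (T_op (A i) (B i) (C i) (D i) Gz (w k i) ->
       rho k i = rho_hat /\ x k i = Gz /\ y k i = w k i) /\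
    (~ T_op (A i) (B i) (C i) (D i) Gz (w k i) ->
       (i \in ID ->
          0 < rho k i /\
          is_resolvent (op_scale (rho k i) (op_add (A i) (lin_at (D i) Gz)))
            (Gz + rho k i *: w k i - rho k i *: (B i Gz + C i Gz)) (x k i) /\
          theta_lo <= 4 * ell i ^+ 2 * rho k i ^+ 2
                      + (ext_inv (beta i) + delta_hat) * rho k i
                      + (mm i * rho k i * `|x k i - Gz|) ^+ 2 <= theta_hi /\
          y k i = (rho k i)^-1 *: (Gz - x k i) + w k i
                  + (B i (x k i) - B i Gz)
                  + (D i (x k i) - lin_at (D i) Gz (x k i))) /\
       (i \notin ID ->
          0 < rho k i /\
          is_resolvent (op_scale (rho k i) (A i))
            (Gz + rho k i *: w k i - rho k i *: (B i Gz + C i Gz)) (x k i) /\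
          y k i = (rho k i)^-1 *: (Gz - x k i) + w k i
                  + (B i (x k i) - B i Gz)))) /\
  (forall k,
    let u : forall i, H i := fun i => x k i - G i (x k ord_max) in
    let v : H0 := \sum_(i < p.+1) Gadj i (y k i) in
    let phi : R := inner (z k) v
        + \sum_(i < p.+1 | i != ord_max) inner (w k i) (u i)
        - \sum_(i < p.+1) (inner (x k i) (y k i)
                           + ext_inv (4%:E * beta i)%E * `|x k i - G i (z k)| ^+ 2) in
    let pi : R := gamma^-1 * `|v| ^+ 2
        + \sum_(i < p.+1 | i != ord_max) `|u i| ^+ 2 in
    (0 < phi ->
       let alpha := tau k * phi / pi in
       tau_lo <= tau k <= tau_hi /\
       z k.+1 = z k - (gamma^-1 * alpha) *: v /\
       (forall i, i != ord_max -> w k.+1 i = w k i - alpha *: u i)) /\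
    (~ (0 < phi) ->
       z k.+1 = z k /\ (forall i, i != ord_max -> w k.+1 i = w k i))).

End PS.

From HB Require Import structures.
From mathcomp Require Import all_boot all_order all_algebra ssrAC.
From mathcomp Require Import all_classical all_reals all_analysis.
From mathcomp Require Import lra.
Import Order.TTheory GRing.Theory Num.Theory.
Import numFieldNormedType.Exports.
Local Open Scope ring_scope.

(* In each of the three branches of Algorithm PS the pair (x, y) satisfies
   y = a0 + B x + C (G z) + D x for some a0 in A x: the correction terms in
   the definition of y are chosen precisely so that the explicit steps of the
   forward-backward evaluation cancel.  Testing this against (r, a) with
   a in A r, monotonicity of A, B and D removes every term except
   <r - x, C (G z) - C r>, and cocoercivity of C together with Young's
   inequality bounds that by |x - G z|^2 / (4 beta). *)

Lemma resolvent_residualE {R : fieldType} {V : lmodType R} {rr : R} {g w c x s : V} :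
  rr != 0 -> g + rr *: w - rr *: c - x = rr *: s -> rr^-1 *: (g - x) = s - w + c.
Proof.
move=> rr0 e; apply: (canLR (scalerK rr0)).
rewrite scalerDr scalerBr -e [RHS](ACl ((2*5)*(3*6)*1*4)%AC) /=.
by rewrite subrr addNr !add0r.
Qed.

Section Hilbert.
Context {R : realType} {V : hilbertType R}.
Implicit Types (u v w : V) (A : V -> V -> Prop) (B C D L : V -> V).

Lemma innerDr u v w : inner u (v + w) = inner u v + inner u w.
Proof. by rewrite innerC innerDl !(innerC u). Qed.

Lemma innerZr (c : R) u v : inner u (c *: v) = c * inner u v.
Proof. by rewrite innerC innerZl innerC. Qed.

Lemma innerNl u v : inner (- u) v = - inner u v.
Proof. by rewrite -scaleN1r innerZl mulN1r. Qed.

Lemma innerNr u v : inner u (- v) = - inner u v.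
Proof. by rewrite innerC innerNl innerC. Qed.

Lemma inner0r u : inner u 0 = 0.
Proof. by rewrite -(scale0r (0 : V)) innerZr mul0r. Qed.

Lemma cocoercive_inner_le (b : \bar R) C g r x :
  (0 < b)%E -> cocoercive b C ->
  inner (r - x) (C g - C r) <= ext_inv (4%:E * b)%E * `|x - g| ^+ 2.
Proof.
move=> b_gt0 /(_ g r); set d := C g - C r.
case: b b_gt0 => [b||] //= => [|_ coco]; last first.
  (* beta = +oo: cocoercivity forces C g = C r *)
  rewrite mulry gtr0_sg // mul1e /= mul0r.
  have [->|d_neq0] := eqVneq d 0; first by rewrite inner0r.
  by rewrite mulyr gtr0_sg ?exprn_gt0 ?normr_gt0 // mul1e leye_eq in coco.
rewrite lte_fin => b_gt0; rewrite -EFinM lee_fin => coco.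
have -> : inner (r - x) d = inner (g - x) d - inner (g - r) d.
  by rewrite !(innerDl, innerNl); lra.
rewrite distrC; move: coco; set e := g - x; set s := inner (g - r) d.
clearbody d e s => coco.
(* Young's inequality, from 0 <= |e - 2 b d|^2 *)
have : 0 <= inner (e - (2 * b) *: d) (e - (2 * b) *: d) by rewrite inner_normE.
rewrite !(innerDl, innerDr, innerNl, innerNr, innerZl, innerZr) !inner_normE.
rewrite (innerC d e) => young.
rewrite -(ler_pM2l (_ : 0 < 4 * b)) ?mulrA ?mulfV ?mul1r ?gt_eqF; nra.
Qed.

Lemma monotone_sum_inner_le A B C D (b : \bar R) x g a0 r a :
  monotone_op A -> monotone_fun B -> (0 < b)%E -> cocoercive b C ->
  monotone_fun D -> A x a0 -> A r a ->
  inner (r - x) (a0 + B x + C g + D x - (B r + C r + D r) - a)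
    <= ext_inv (4%:E * b)%E * `|x - g| ^+ 2.
Proof.
move=> monoA monoB b_gt0 cocoC monoD Ax Ar.
have := monoA r x a a0 Ar Ax.
have := monoB r x _ _ erefl erefl.
have := monoD r x _ _ erefl erefl.
have := cocoercive_inner_le _ _ g r x b_gt0 cocoC.
by rewrite !(innerDr, innerNr); lra.
Qed.

Lemma resolvent_lin_decomposition {A B C D L} {rr : R} {g w x y} :
  rr != 0 ->
  is_resolvent (op_scale rr (op_add A L)) (g + rr *: w - rr *: (B g + C g)) x ->
  y = rr^-1 *: (g - x) + w + (B x - B g) + (D x - L x) ->
  exists2 a0, A x a0 & y = a0 + B x + C g + D x.
Proof.
move=> rr0 [_ [[a0 [Ax ->]] res]] ->; exists a0 => //.
rewrite (resolvent_residualE rr0 res) !addrA.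
rewrite (ACl ((2*10)*(3*6)*(4*8)*1*7*5*9)%AC) /=.
by rewrite subrr addNr subrr !add0r.
Qed.

Lemma resolvent_decomposition {A B C} {rr : R} {g w x y} :
  rr != 0 ->
  is_resolvent (op_scale rr A) (g + rr *: w - rr *: (B g + C g)) x ->
  y = rr^-1 *: (g - x) + w + (B x - B g) ->
  exists2 a0, A x a0 & y = a0 + B x + C g.
Proof.
move=> rr0 [a0 [Ax res]] ->; exists a0 => //.
rewrite (resolvent_residualE rr0 res) !addrA.
rewrite (ACl ((2*5)*(3*7)*1*6*4)%AC) /=.
by rewrite addNr subrr !add0r.
Qed.

End Hilbert.

Theorem lemma4p1 (R : realType) (p : nat) (H : 'I_p.+1 -> hilbertType R) (hp : (0 < p)%N)
  (* (A1) *)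
  (G : forall i, H ord_max -> H i) (Gadj : forall i, H i -> H ord_max)
  (hGlin : forall i (a : R) (u v : H ord_max), G i (a *: u + v) = a *: G i u + G i v)
  (hGcont : forall i, continuous (G i))
  (hGadj : forall i (u : H ord_max) (v : H i), inner (G i u) v = inner u (Gadj i v))
  (hGn : forall u, G ord_max u = u)
  (* (A2) *)
  (A : forall i, H i -> H i -> Prop) (hA : forall i, maximal_monotone (A i))
  (* (A3) *)
  (B : forall i, H i -> H i) (ell : 'I_p.+1 -> R)
  (hell : forall i, 0 <= ell i)
  (hBmon : forall i, monotone_fun (B i)) (hBlip : forall i, lipschitz_with (ell i) (B i))
  (* (A4) *)
  (C : forall i, H i -> H i) (beta : 'I_p.+1 -> \bar R)
  (hbeta : forall i, (0 < beta i)%E) (hC : forall i, cocoercive (beta i) (C i))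
  (* (A5) *)
  (D : forall i, H i -> H i) (mm : 'I_p.+1 -> R) (hmm : forall i, 0 <= mm i)
  (hDmon : forall i, monotone_fun (D i))
  (hDdiff : forall i (u : H i), differentiable (D i) u)
  (hDcont : forall i (u : H i) (eps : R), 0 < eps -> exists2 del : R, 0 < del &
      forall u' : H i, `|u' - u| < del ->
        forall h, `|'d (D i) u' h - 'd (D i) u h| <= eps * `|h|)
  (hDlip : forall i (u u' h : H i),
      `|'d (D i) u h - 'd (D i) u' h| <= mm i * `|u - u'| * `|h|)
  (* (A6) *)
  (hsol : exists (zs : H ord_max) (t : forall i, H i),
      (forall i, T_op (A i) (B i) (C i) (D i) (G i zs) (t i)) /\
      \sum_(i < p.+1) Gadj i (t i) = 0)
  (* (A7) *)
  (ID : {set 'I_p.+1})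
  (hID : forall i, i \in ID -> 0 < mm i)
  (hnID : forall i, i \notin ID -> mm i = 0 /\ forall u, D i u = 0)
  (* parameters of Algorithm PS *)
  (tau_lo tau_hi theta_lo theta_hi rho_hat delta_hat gamma : R)
  (htau : 0 < tau_lo < tau_hi) (htau2 : tau_hi < 2)
  (htheta : 0 < theta_lo < theta_hi) (htheta2 : theta_hi < 2)
  (hrho : 0 < rho_hat) (hdelta : 0 < delta_hat) (hgamma : 0 < gamma)
  (* the iterates *)
  (z : nat -> H ord_max) (w : nat -> forall i, H i)
  (rho : nat -> 'I_p.+1 -> R) (x y : nat -> forall i, H i) (tau : nat -> R)
  (hPS : PS_iterates G Gadj A B C D ell beta mm ID
           tau_lo tau_hi theta_lo theta_hi rho_hat delta_hat gamma
           z w rho x y tau) :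
  forall (k : nat) (i : 'I_p.+1) (r a : H i), A i r a ->
    inner (r - x k i) (y k i - (B i r + C i r + D i r) - a)
    <= ext_inv (4%:E * beta i)%E * `|x k i - G i (z k)| ^+ 2.
Proof.
move=> k i r a Ar; have [_ [steps _]] := hPS; have [solved unsolved] := steps k i.
have [a0 Ax ->] : exists2 a0, A i (x k i) a0 &
    y k i = a0 + B i (x k i) + C i (G i (z k)) + D i (x k i).
  have [T|notT] := pselect (T_op (A i) (B i) (C i) (D i) (G i (z k)) (w k i)).
    have [_ [-> ->]] := solved T.
    by case: T => a0 [Ax ->]; exists a0.
  have [inID notinID] := unsolved notT.
  have [iID|iNID] := boolP (i \in ID).
    have [rho_gt0 [res [_ ->]]] := inID iID.
    exact: resolvent_lin_decomposition (lt0r_neq0 rho_gt0) res erefl.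
  have [rho_gt0 [res ->]] := notinID iNID.
  have [a0 Ax ->] := resolvent_decomposition (lt0r_neq0 rho_gt0) res erefl.
  by exists a0; rewrite // ((hnID i iNID).2 (x k i)) addr0.
exact: monotone_sum_inner_le (hA i).1 (hBmon i) (hbeta i) (hC i) (hDmon i) Ax Ar.
Qed.
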